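(* For every fluent sentence $\alpha$ of ESG: $\models_{\mathrm{ESG}}\alpha$ iff $\models_{\text{t-ESG}}\alpha$.
   Context: The logic t-ESG. Sorts object, action, clock, time; standard names $\mathcal N_O,\mathcal N_A,\mathcal N_C$ (countably infinite) and time names $\mathbb Q_{\ge0}$; fluent and rigid function and predicate symbols (action- and clock-valued functions rigid); distinguished fluent predicates $\mathit{Poss}$, $\mathit{reset}$, $g$. Primitive terms/formulas: symbols applied to standard names. Situation formulas include $P(\vec t)$, $t_1=t_2$, clock comparisons $c\bowtie r$, $r\bowtie r'$ ($r,r'\in\mathbb Q_{\ge0}$), closed under $\wedge,\neg,\forall$ and the modal operators $\square,[\delta],[\![\delta]\!]$. A formula is static if it contains no $\square$, $[\cdot]$, $[\![\cdot]\!]$; it is fluent if it is static, contains no clock terms and does not mention $g$ or $\mathit{Poss}$. Timed traces are sequences $t_1p_1t_2p_2\cdots$ of non-decreasing reals $t_i\ge0$ alternating with action names. A t-ESG world maps (primitive term, finite timed trace) to a standard name of the right sort, (primitive formula, finite timed trace) to $\{0,1\}$ and (clock name, finite timed trace) to $\mathbb R_{\ge0}$, where rigid symbols are trace-independent, distinct primitive action terms (and clock terms) are mapped to distinct names, clocks start at $0$, advance with time and are set to $0$ by actions $p$ with $w[\mathit{reset}(c),z\cdot p]=1$. Denotation: $|n|^z_w=n$, $|f(t_1,\dots,t_k)|^z_w=w[f(|t_1|^z_w,\dots,|t_k|^z_w),z]$. For fluent sentences truth is: $w,z\models F(\vec t)$ iff $w[F(|\vec t|^z_w),z]=1$; $w,z\models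 t_1=t_2$ iff the denotations are identical; $r\bowtie r'$ iff true in $\mathbb Q$; Boolean connectives as usual; $w,z\models\forall x\alpha$ iff $w,z\models\alpha^x_n$ for all names $n$ of the sort of $x$. $w\models\alpha$ means $w,\langle\rangle\models\alpha$; $\models_{\text{t-ESG}}\alpha$ means $w\models\alpha$ for every t-ESG world. The logic ESG: its language consists of t-ESG formulas mentioning only object and action terms (no clock terms, no $g$, no $\mathit{reset}$, only unbounded until). ESG traces are sequences of action names; an ESG world maps (primitive object/action term, finite ESG trace) to standard names and (primitive formula, finite ESG trace) to $\{0,1\}$, with rigid symbols trace-independent and unique names for actions; truth of fluent sentences is defined by the same clauses; $\models_{\mathrm{ESG}}\alpha$ means $w,\langle\rangle\models\alpha$ for every ESG world $w$. *)

From Stdlib Require Import Reals List Bool.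
Import ListNotations.
Set Implicit Arguments.
Open Scope R_scope.

Inductive sort := SObj | SAct.

(** Standard names: N_O and N_A, both countably infinite (indexed by nat). *)
Inductive name := NmO (n : nat) | NmA (n : nat).

Definition sort_of_name (n : name) : sort :=
  match n with NmO _ => SObj | NmA _ => SAct end.

Definition sort_eqb (s s' : sort) : bool :=
  match s, s' with SObj, SObj | SAct, SAct => true | _, _ => false end.

Record signature := {
  fsym : Type;
  fargs : fsym -> list sort;
  fres : fsym -> sort;
  frigid : fsym -> bool;
  act_fun_rigid : forall f, fres f = SAct -> frigid f = true;
  psym : Type;
  pargs : psym -> list sort;
  prigid : psym -> bool
}.
Arguments fargs {s} _.
Arguments fres {s} _.
Arguments frigid {s} _.
Arguments pargs {s} _.
Arguments prigid {s} _.

Section Syntax.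
Variable S : signature.

Inductive term :=
| TVar (x : nat) (s : sort)
| TName (n : name)
| TApp (f : fsym S) (ts : list term).

(** Fluent formulas (no modalities, no clocks, no Poss, no g). *)
Inductive formula :=
| FPred (P : psym S) (ts : list term)
| FEq (t1 t2 : term)
| FNot (a : formula)
| FAnd (a b : formula)
| FAll (x : nat) (s : sort) (a : formula).

Inductive has_sort : term -> sort -> Prop :=
| HS_var x s : has_sort (TVar x s) s
| HS_name n : has_sort (TName n) (sort_of_name n)
| HS_app f ts : Forall2 has_sort ts (fargs f) -> has_sort (TApp f ts) (fres f).

Inductive term_closed (B : list (nat * sort)) : term -> Prop :=
| TC_var x s : In (x, s) B -> term_closed B (TVar x s)
| TC_name n : term_closed B (TName n)
| TC_app f ts : Forall (term_closed B) ts -> term_closed B (TApp f ts).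

Inductive wf_formula : list (nat * sort) -> formula -> Prop :=
| WF_pred B P ts : Forall2 has_sort ts (pargs P) -> Forall (term_closed B) ts ->
    wf_formula B (FPred P ts)
| WF_eq B t1 t2 s : has_sort t1 s -> has_sort t2 s ->
    term_closed B t1 -> term_closed B t2 -> wf_formula B (FEq t1 t2)
| WF_not B a : wf_formula B a -> wf_formula B (FNot a)
| WF_and B a b : wf_formula B a -> wf_formula B b -> wf_formula B (FAnd a b)
| WF_all B x s a : wf_formula ((x, s) :: B) a -> wf_formula B (FAll x s a).

Definition fluent_sentence (a : formula) : Prop := wf_formula [] a.

(** Semantics.  [rho] is a pending substitution of standard names for
    variables (innermost binder first): [sat .. rho a] is the truth of
    [a] with the substitution [rho] applied, so that
    [forall x a] is true iff [a^x_n] is true for all names n of the sort of x. *)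
Fixpoint lookup (rho : list (nat * sort * name)) (x : nat) (s : sort) : name :=
  match rho with
  | [] => match s with SObj => NmO 0 | SAct => NmA 0 end
  | (y, s', n) :: rho' =>
      if Nat.eqb x y && sort_eqb s s' then n else lookup rho' x s
  end.

Variable Tr : Type.
Variable Fv : fsym S -> list name -> Tr -> name.
Variable Pv : psym S -> list name -> Tr -> bool.

Fixpoint den (rho : list (nat * sort * name)) (z : Tr) (t : term) : name :=
  match t with
  | TVar x s => lookup rho x s
  | TName n => n
  | TApp f ts => Fv f (map (den rho z) ts) z
  end.

Fixpoint sat (rho : list (nat * sort * name)) (z : Tr) (a : formula) : Prop :=
  match a with
  | FPred P ts => Pv P (map (den rho z) ts) z = true
  | FEq t1 t2 => den rho z t1 = den rho z t2
  | FNot b => ~ sat rho z b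
  | FAnd b c => sat rho z b /\ sat rho z c
  | FAll x s b => forall n : name, sort_of_name n = s -> sat ((x, s, n) :: rho) z b
  end.

End Syntax.

Arguments TVar {S}.
Arguments TName {S}.

(** ESG worlds: traces are finite sequences of action names (indices of N_A). *)
Definition atrace := list nat.

Record esg_world (S : signature) := {
  ew_f : fsym S -> list name -> atrace -> name;
  ew_p : psym S -> list name -> atrace -> bool;
  ew_sort : forall f ns z, map sort_of_name ns = fargs f ->
      sort_of_name (ew_f f ns z) = fres f;
  ew_frigid : forall f ns z z', frigid f = true -> ew_f f ns z = ew_f f ns z';
  ew_prigid : forall P ns z z', prigid P = true -> ew_p P ns z = ew_p P ns z';
  ew_una : forall f g ns ms z, fres f = SAct -> fres g = SAct ->
      map sort_of_name ns = fargs f -> map sort_of_name ms = fargs g ->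
      ew_f f ns z = ew_f g ms z -> f = g /\ ns = ms
}.

Definition esg_valid (S : signature) (a : formula S) : Prop :=
  forall w : esg_world S, sat (ew_f w) (ew_p w) [] [] a.

(** Timed traces: finite sequences (t1,p1)(t2,p2)... of non-decreasing real
    times t_i >= 0 paired with action names. *)
Definition ttrace := list (R * nat).

Fixpoint ttrace_ok_from (t0 : R) (z : ttrace) : Prop :=
  match z with
  | [] => True
  | (t, _) :: z' => t0 <= t /\ ttrace_ok_from t z'
  end.

Definition ttrace_ok (z : ttrace) : Prop := ttrace_ok_from 0 z.

(** time of the last action of a timed trace (0 for the empty trace) *)
Definition last_time (z : ttrace) : R := fst (last z (0, 0%nat)).

(** t-ESG worlds (restricted to the symbols of the signature, plus the clock
    machinery: clock names N_C = nat, the fluent predicate reset(c) and the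
    clock values). *)
Record tesg_world (S : signature) := {
  tw_f : fsym S -> list name -> ttrace -> name;
  tw_p : psym S -> list name -> ttrace -> bool;
  tw_reset : nat -> ttrace -> bool;
  tw_clock : nat -> ttrace -> R;
  tw_sort : forall f ns z, map sort_of_name ns = fargs f ->
      sort_of_name (tw_f f ns z) = fres f;
  tw_frigid : forall f ns z z', ttrace_ok z -> ttrace_ok z' ->
      frigid f = true -> tw_f f ns z = tw_f f ns z';
  tw_prigid : forall P ns z z', ttrace_ok z -> ttrace_ok z' ->
      prigid P = true -> tw_p P ns z = tw_p P ns z';
  tw_una : forall f g ns ms z, ttrace_ok z -> fres f = SAct -> fres g = SAct ->
      map sort_of_name ns = fargs f -> map sort_of_name ms = fargs g ->
      tw_f f ns z = tw_f g ms z -> f = g /\ ns = ms;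
  tw_clock0 : forall c, tw_clock c [] = 0;
  tw_clock_step : forall c z t p, ttrace_ok (z ++ [(t, p)]) ->
      tw_clock c (z ++ [(t, p)]) =
        if tw_reset c (z ++ [(t, p)]) then 0
        else tw_clock c z + (t - last_time z)
}.

Definition tesg_valid (S : signature) (a : formula S) : Prop :=
  forall w : tesg_world S, sat (tw_f w) (tw_p w) [] [] a.

(* Truth of a fluent sentence is evaluated at the empty trace, and there a
   world of either logic is nothing but an interpretation of the function and
   predicate symbols.  Conversely, every such interpretation, taken constant
   along all traces, is a world of either logic: rigidity and unique names are
   inherited from the empty trace, and for t-ESG the clocks are never reset
   and simply read the time of the last action.  Hence a countermodel in one
   logic yields a countermodel in the other. *)
From Stdlib Require Import Reals List.
Import ListNotations.
Open Scope R_scope.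

Section Congruence.
Context {S : signature} {T1 T2 : Type}.
Variables (F1 : fsym S -> list name -> T1 -> name)
          (F2 : fsym S -> list name -> T2 -> name).
Variables (P1 : psym S -> list name -> T1 -> bool)
          (P2 : psym S -> list name -> T2 -> bool).
Variables (z1 : T1) (z2 : T2).
Hypothesis eqF : forall f ns, F1 f ns z1 = F2 f ns z2.
Hypothesis eqP : forall P ns, P1 P ns z1 = P2 P ns z2.

Lemma den_congr (rho : list (nat * sort * name)) :
  forall t : term S, den F1 rho z1 t = den F2 rho z2 t.
Proof.
  fix den_congr 1; intros [x s | n | f ts]; simpl; [reflexivity | reflexivity |].
  rewrite eqF; f_equal.
  induction ts as [| t ts IHts]; simpl; [reflexivity |].
  now rewrite den_congr, IHts.
Qed.

Lemma sat_congr (a : formula S) :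
  forall rho, sat F1 P1 rho z1 a <-> sat F2 P2 rho z2 a.
Proof.
  induction a as [P ts | t1 t2 | b IHb | b IHb c IHc | x s b IHb];
    intros rho; simpl.
  - now rewrite eqP, (map_ext _ _ (den_congr rho)).
  - now rewrite !den_congr.
  - now rewrite IHb.
  - now rewrite IHb, IHc.
  - now split; intros Hb n Hn; apply IHb, Hb.
Qed.

End Congruence.

Lemma last_time_snoc (z : ttrace) (t : R) (p : nat) :
  last_time (z ++ [(t, p)]) = t.
Proof. now unfold last_time; rewrite last_last. Qed.

Section ConstantWorlds.
Context {S : signature}.

Definition esg_of_tesg (w : tesg_world S) : esg_world S := {|
  ew_f := fun f ns _ => tw_f w f ns [];
  ew_p := fun P ns _ => tw_p w P ns [];
  ew_sort := fun f ns _ => tw_sort w f ns [];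
  ew_frigid := fun _ _ _ _ _ => eq_refl;
  ew_prigid := fun _ _ _ _ _ => eq_refl;
  ew_una := fun f g ns ms _ => tw_una w f g ns ms [] I
|}.

Lemma last_time_clock_step (z : ttrace) (t : R) (p : nat) :
  last_time (z ++ [(t, p)]) = last_time z + (t - last_time z).
Proof. rewrite last_time_snoc; ring. Qed.

Definition tesg_of_esg (w : esg_world S) : tesg_world S := {|
  tw_f := fun f ns _ => ew_f w f ns [];
  tw_p := fun P ns _ => ew_p w P ns [];
  tw_reset := fun _ _ => false;
  tw_clock := fun _ z => last_time z;
  tw_sort := fun f ns _ => ew_sort w f ns [];
  tw_frigid := fun _ _ _ _ _ _ _ => eq_refl;
  tw_prigid := fun _ _ _ _ _ _ _ => eq_refl;
  tw_una := fun f g ns ms _ _ => ew_una w f g ns ms [];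
  tw_clock0 := fun _ => eq_refl;
  tw_clock_step := fun _ z t p _ => last_time_clock_step z t p
|}.

End ConstantWorlds.

Theorem mainTheorem4 (S : signature) (a : formula S) :
  fluent_sentence a -> (esg_valid a <-> tesg_valid a).
Proof.
  (* Every [formula] is fluent. *)
  intros _; split; intros valid w.
  - apply (sat_congr (ew_f (esg_of_tesg w)) (tw_f w) (ew_p (esg_of_tesg w))
             (tw_p w) [] []); try reflexivity.
    apply valid.
  - apply (sat_congr (tw_f (tesg_of_esg w)) (ew_f w) (tw_p (tesg_of_esg w))
             (ew_p w) [] []); try reflexivity.
    apply valid.
Qed.
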